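(* Let $G\in\mathcal{G}(\widehat{C}_6,\widehat{C}_7)$ and $x\in V(G)$, and suppose that the set $S^*$ is independent. Then $x$ is extendable in $H_x$ if and only if $x$ is extendable in $H^*_x$.
   Context: All graphs are finite, simple and undirected. $\mathcal{G}(\widehat{C}_6,\widehat{C}_7)$ is the family of graphs with no subgraph (not necessarily induced) isomorphic to $C_6$ or $C_7$. For a vertex set $S$, $N_i(S)$ is the set of vertices at distance exactly $i$ from $S$, $N_i[S]$ those at distance at most $i$, $N(S)=N_1(S)$, $N[S]=N_1[S]$, $N(v)=N(\{v\})$ etc. A vertex $v$ of a graph $H$ is extendable in $H$ if there is no independent set $S\subseteq N_2(v)$ (distances computed in $H$) with $N(v)\subseteq N[S]$ (in $H$). In $G$: $A^*$ is the set of connected components $A$ of $G[N_2(x)]$ for which there exists $a\in V(A)$ with $N(x)\cap N(a)=N(x)\cap N(V(A))$; $V(A^* )$ is the union of their vertex sets; $D=N(x)\setminus N(V(A^* ))$; $H_x=G[N_2[x]\setminus N[V(A^* )]]$; $S^*=\{v\in N_2(x)\setminus V(A^* ) : |N(v)\cap D|\ge 2\}$ (a subset of $V(H_x)$); and $H^*_x=G[V(H_x)\setminus N[S^*]]$ (neighbourhoods in $G$). *)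

(* A finite simple graph is a symmetric irreflexive relation
   e : rel T on a finite type T (vertex set = T). *)
From mathcomp Require Import all_boot.
Set Implicit Arguments. Unset Strict Implicit. Unset Printing Implicit Defensive.

Section Graphs.
Variable T : finType.

Definition simple_graph (e : rel T) := symmetric e /\ irreflexive e.

(* G contains a (not necessarily induced) subgraph isomorphic to C_k, k >= 3:
   k distinct vertices f 0, ..., f (k-1) with f i ~ f (i+1 mod k). *)
Definition has_cycle_subgraph (e : rel T) (k : nat) :=
  exists f : 'I_k -> T, injective f /\ forall i : 'I_k, e (f i) (f (ordS i)).

Definition C6C7_free (e : rel T) :=
  ~ has_cycle_subgraph e 6 /\ ~ has_cycle_subgraph e 7.

Definition induced (e : rel T) (W : {set T}) : rel T :=
  fun u v => [&& e u v, u \in W & v \in W].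

Definition nbh (r : rel T) (v : T) : {set T} := [set u | r v u].
Definition nbhS (r : rel T) (S : {set T}) : {set T} :=
  [set u | (u \notin S) && [exists s in S, r s u]].
Definition cnbhS (r : rel T) (S : {set T}) : {set T} := S :|: nbhS r S.
Definition nbh2 (r : rel T) (v : T) : {set T} :=
  [set u | [&& u != v, ~~ r v u & [exists w, r v w && r w u]]].
Definition cnbh2 (r : rel T) (v : T) : {set T} := v |: (nbh r v :|: nbh2 r v).

Definition independent (r : rel T) (S : {set T}) :=
  forall u v, u \in S -> v \in S -> ~~ r u v.

Definition extendable (r : rel T) (v : T) :=
  ~ exists S : {set T},
      [/\ S \subset nbh2 r v, independent r S & nbh r v \subset cnbhS r S].

Definition N2x (e : rel T) (x : T) := nbh2 e x.
Definition comp2 (e : rel T) (x u : T) : {set T} :=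
  [set w in N2x e x | connect (induced e (N2x e x)) u w].
Definition VAstar (e : rel T) (x : T) : {set T} :=
  [set u in N2x e x | [exists a in comp2 e x u,
      nbh e x :&: nbh e a == nbh e x :&: nbhS e (comp2 e x u)]].
Definition Dset (e : rel T) (x : T) : {set T} :=
  nbh e x :\: nbhS e (VAstar e x).
Definition VHx (e : rel T) (x : T) : {set T} :=
  cnbh2 e x :\: cnbhS e (VAstar e x).
Definition Sstar (e : rel T) (x : T) : {set T} :=
  [set v in N2x e x :\: VAstar e x | 2 <= #|nbh e v :&: Dset e x|].
Definition VHstarx (e : rel T) (x : T) : {set T} :=
  VHx e x :\: cnbhS e (Sstar e x).

End Graphs.

From mathcomp Require Import all_boot.
Set Implicit Arguments. Unset Strict Implicit. Unset Printing Implicit Defensive.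

(* Both directions transport blocking sets: independent sets [S] inside [N_2(x)]
   dominating [N(x)].  A blocking set of [H*_x] together with [S*] blocks in [H_x],
   because [H*_x] avoids [N[S*]].  Conversely a blocking set [S] of [H_x] restricts
   to [H*_x]; the point is that a vertex [s] of [S] dominating a neighbour [d] of [x]
   in [H*_x] has no neighbour [t] in [S*].  Otherwise [t] has two neighbours
   [d1], [d2] in [D], dominated by [u1], [u2] in [S]; as the components of the [u_i]
   in [G[N_2(x)]] are not in [A*], walking in them yields [z1], [z2] in [N_2(x)]
   such that [d1 u1 z1 d2 u2 z2] is a 6-cycle, while each alternative configuration
   met along the way closes a [C_6] or a [C_7] through [x]. *)

Lemma path_exit (T : Type) (r : rel T) (P : pred T) a p :
  path r a p -> P a -> ~~ P (last a p) ->
  exists y z, [/\ P y, ~~ P z, r y z & y = a \/ exists2 c, P c & r c y].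
Proof.
elim: p a => [|b p IHp] a /=; first by move=> _ ->.
case/andP=> rab pab Pa; have [Pb|nPb] := boolP (P b); last by exists a, b; split => //; left.
case/(IHp b pab Pb) => y [z [Py nPz ryz yb]]; exists y, z; split => //.
by right; case: yb => [->|//]; exists a.
Qed.

Section Graph.
Variables (T : finType) (e : rel T).

Lemma ucycle_has_cycle_subgraph y p :
  ucycle e (y :: p) -> has_cycle_subgraph e (size p).+1.
Proof.
case/andP=> cyc uq; exists (fun i : 'I_(size p).+1 => nth y (y :: p) i); split.
  by move=> i j /eqP; rewrite nth_uniq // => /eqP/val_inj.
move=> i; have := next_cycle cyc (mem_nth y (ltn_ord i : i < size (y :: p))).
rewrite next_nth mem_nth // index_uniq //=.
have [ltip|] := ltnP i (size p); first by rewrite modn_small.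
rewrite leq_eqVlt ltnNge -ltnS ltn_ord orbF => /eqP <-.
by rewrite modnn (nth_default y (leqnn (size p))).
Qed.

Definition blocking (r : rel T) (v : T) (S : {set T}) :=
  [/\ S \subset nbh2 r v, independent r S & nbh r v \subset cnbhS r S].

Lemma nbh2P (r : rel T) v u :
  reflect [/\ u != v, ~~ r v u & exists w, r v w && r w u] (u \in nbh2 r v).
Proof. by rewrite inE; apply: (iffP and3P) => -[-> -> /existsP]. Qed.

Lemma induced_subrel (W' W : {set T}) :
  W' \subset W -> subrel (induced e W') (induced e W).
Proof. by move=> sW u v /and3P[uv uW vW]; rewrite /induced uv !(subsetP sW). Qed.

Lemma nbh2_induced (W : {set T}) v :
  v \in W -> nbh2 (induced e W) v \subset nbh2 e v :&: W.
Proof.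
move=> vW; apply/subsetP => u /nbh2P[uv nvu [w /andP[/and3P[vw _ _] /and3P[wu _ uW]]]].
rewrite inE uW andbT; apply/nbh2P; split => //; last by exists w; rewrite vw.
by move: nvu; rewrite /induced vW uW !andbT.
Qed.

Lemma nbh2_induced_sub (W' W : {set T}) v :
  W' \subset W -> v \in W' -> nbh2 (induced e W') v \subset nbh2 (induced e W) v.
Proof.
move=> sW vW'; apply/subsetP => u uN2.
have /setIP[/nbh2P[_ nvu _] uW'] := subsetP (nbh2_induced vW') u uN2.
case/nbh2P: uN2 => uv _ [w /andP[vw wu]]; apply/nbh2P; split => //.
  by rewrite /induced negb_and nvu.
by exists w; rewrite !(induced_subrel sW).
Qed.

Lemma cnbhS_adj (r : rel T) (S : {set T}) s u : s \in S -> r s u -> u \in cnbhS r S.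
Proof.
move=> sS rsu; rewrite !inE; case: (boolP (u \in S)) => //= _.
by apply/exists_inP; exists s.
Qed.

Lemma cnbhS_sub (r r' : rel T) (S S' : {set T}) :
  subrel r r' -> S \subset S' -> cnbhS r S \subset cnbhS r' S'.
Proof.
move=> srr sSS; apply/subsetP => u; rewrite inE => /orP[/(subsetP sSS) uS'|].
  by rewrite inE uS'.
by rewrite inE => /andP[_ /exists_inP[s /(subsetP sSS) sS' /srr]]; apply: cnbhS_adj.
Qed.

Lemma independent_sub (r r' : rel T) (S S' : {set T}) :
  subrel r' r -> S' \subset S -> independent r S -> independent r' S'.
Proof.
move=> srr sSS indS u v /(subsetP sSS) uS /(subsetP sSS) vS.
exact: contra (@srr u v) (indS u v uS vS).
Qed.

Lemma independent_induced (W S : {set T}) :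
  S \subset W -> independent (induced e W) S -> independent e S.
Proof.
move=> sSW indS u v uS vS; move: (indS u v uS vS).
by rewrite /induced (subsetP sSW u uS) (subsetP sSW v vS) !andbT.
Qed.

Section LocalStructure.
Hypothesis esym : symmetric e.

Lemma independentU (A B : {set T}) :
  independent e A -> independent e B ->
  (forall a b, a \in A -> b \in B -> ~~ e a b) -> independent e (A :|: B).
Proof.
move=> indA indB nAB u v /setUP[uA|uB] /setUP[vA|vB]; auto.
by rewrite esym; apply: nAB.
Qed.

Variable x : T.

Local Notation N2 := (N2x e x).
Local Notation VA := (VAstar e x).
Local Notation D := (Dset e x).
Local Notation VH := (VHx e x).
Local Notation Ss := (Sstar e x).
Local Notation VHs := (VHstarx e x).
Local Notation Hx := (induced e VH).
Local Notation Hstar := (induced e VHs).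

Lemma VAstar_N2 : VA \subset N2.
Proof. by apply/subsetP => u; rewrite inE => /andP[]. Qed.

Lemma comp2_N2 u : comp2 e x u \subset N2.
Proof. by apply/subsetP => w; rewrite inE => /andP[]. Qed.

Lemma VAstar_closed s u : s \in VA -> u \in N2 -> e s u -> u \in VA.
Proof.
move=> sVA uN2 su; have sN2 := subsetP VAstar_N2 s sVA.
have csym : connect_sym (induced e N2).
  by apply: sym_connect_sym => a b; rewrite /induced esym; congr (_ && _); exact: andbC.
have comp_us : comp2 e x u = comp2 e x s.
  apply/setP => w; rewrite !inE; congr (_ && _); apply: same_connect => //.
  by rewrite csym; apply: connect1; rewrite /induced su sN2 uN2.
by move: sVA; rewrite [u \in VA]inE [s \in VA]inE uN2 comp_us => /andP[].
Qed.

Lemma VHx_notVA u : u \in VH -> u \notin VA.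
Proof. by rewrite !inE negb_or -andbA => /andP[]. Qed.

Lemma N2_VHx u : u \in N2 -> u \notin VA -> u \in VH.
Proof.
move=> uN2 uVA; rewrite in_setD /cnbh2 !in_setU1 !in_setU uN2 !orbT andbT.
rewrite negb_or uVA in_set uVA /=.
by apply/exists_inP => -[s sVA su]; case/negP: uVA; apply: VAstar_closed su.
Qed.

Lemma Dset_nbh d : d \in D -> e x d.
Proof. by rewrite !inE => /andP[]. Qed.

Lemma Dset_VHx d : d \in D -> d \in VH.
Proof.
rewrite in_setD => /andP[nd xd].
rewrite in_setD /cnbhS in_setU negb_or nd andbT /cnbh2 !in_setU1 !in_setU xd orbT andbT.
by apply: contraTN xd => /(subsetP VAstar_N2)/nbh2P[_ nxd _]; rewrite inE.
Qed.

Lemma Sstar_spec u :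
  u \in Ss -> [/\ u \in N2, u \notin VA & 1 < #|nbh e u :&: D|].
Proof. by rewrite !inE => /andP[/andP[-> ->] ->]. Qed.

Lemma Sstar_VHx u : u \in Ss -> u \in VH.
Proof. by case/Sstar_spec => uN2 uVA _; apply: N2_VHx. Qed.

Lemma x_notin_N2 : x \notin N2.
Proof. by apply/nbh2P => -[]; rewrite eqxx. Qed.

Lemma x_notin_nbhS (A : {set T}) : A \subset N2 -> x \notin cnbhS e A.
Proof.
move=> sA; rewrite !inE negb_or; apply/andP; split.
  by apply: contraNN x_notin_N2 => /(subsetP sA).
apply/negP => /andP[_ /exists_inP[a /(subsetP sA)/nbh2P[_ xa _] ax]].
by rewrite esym ax in xa.
Qed.

Lemma x_VHx : x \in VH.
Proof. by rewrite in_setD x_notin_nbhS ?VAstar_N2 // /cnbh2 in_setU1 eqxx. Qed.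

Lemma x_VHstarx : x \in VHs.
Proof.
rewrite in_setD x_VHx andbT; apply: x_notin_nbhS.
by apply/subsetP => u /Sstar_spec[].
Qed.

Lemma VHstarx_VHx : VHs \subset VH.
Proof. by apply/subsetP => u; rewrite inE => /andP[]. Qed.

Lemma VHstarx_nadj_Sstar u t : u \in VHs -> t \in Ss -> ~~ e t u.
Proof.
rewrite inE => /andP[/negP uS _] tS; apply/negP => tu; apply: uS.
exact: cnbhS_adj tS tu.
Qed.

Lemma VHx_VHstarx u : u \in VH -> u \notin cnbhS e Ss -> u \in VHs.
Proof. by move=> uVH nuS; rewrite in_setD uVH nuS. Qed.

Lemma nbh_outside_VAstar u :
  u \in N2 -> u \notin VA ->
  exists w d', [/\ connect (induced e N2) u w, e x d', e w d' & ~~ e u d'].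
Proof.
move=> uN2 uVA.
have [/exists_inP[w wc /existsP[d' /and3P[xd' wd' ud']]]|none] :=
  boolP [exists w in comp2 e x u, exists d', [&& e x d', e w d' & ~~ e u d']].
  by exists w, d'; split => //; move: wc; rewrite inE => /andP[].
case/negP: uVA; rewrite [u \in VA]inE uN2; apply/exists_inP; exists u.
  by rewrite inE uN2 connect0.
apply/eqP/setP => d; rewrite !in_setI [d \in nbh e x]inE [d \in nbh e u]inE.
case xd: (e x d) => //=; rewrite in_set.
have -> /= : d \notin comp2 e x u.
  by apply: contraTN xd => /(subsetP (comp2_N2 u))/nbh2P[_ /negbTE->].
apply/idP/exists_inP => [ud|[s sc sd]]; first by exists u; rewrite // inE uN2 connect0.
by move/exists_inPn: none => /(_ s sc)/existsPn/(_ d); rewrite xd sd negbK.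
Qed.

Lemma blocking_subset (W S : {set T}) :
  x \in W -> blocking (induced e W) x S -> S \subset N2 :&: W.
Proof. by move=> xW [sub _ _]; apply: subset_trans sub (nbh2_induced xW). Qed.

Lemma blocking_dominates_D S d :
  blocking Hx x S -> d \in D -> exists2 u, u \in S & e u d.
Proof.
move=> blk dD; have sS := blocking_subset x_VHx blk; case: blk => _ _ dom.
have xd := Dset_nbh dD.
have : d \in nbh Hx x by rewrite inE /induced xd x_VHx Dset_VHx.
move/(subsetP dom); rewrite in_setU in_set => /orP[dS|/andP[_ /exists_inP[u uS]]].
  by move: (subsetP sS d dS) => /setIP[/nbh2P[_ /negP]].
by case/and3P; exists u.
Qed.

Hypothesis eirr : irreflexive e.
Hypotheses (noC6 : ~ has_cycle_subgraph e 6) (noC7 : ~ has_cycle_subgraph e 7).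

Ltac distinct :=
  repeat match goal with H : context [N2x] |- _ => move: H; rewrite /N2x => /nbh2P[? ? _] end;
  apply/eqP => eq_ab; subst;
  match goal with
  | H : is_true (e ?a ?a) |- _ => by rewrite eirr in H
  | H : is_true (?a != ?a) |- _ => by rewrite eqxx in H
  | H : is_true (e ?a ?b), H' : is_true (~~ e ?a ?b) |- _ => by rewrite H in H'
  | H : is_true (e ?a ?b), H' : is_true (~~ e ?b ?a) |- _ => by rewrite esym H in H'
  end.

(* Refutes the goal with the cycle [a :: p]; distinctness of its vertices is
   read off the adjacency and [N_2(x)]-membership hypotheses in context. *)
Ltac no_cycle noC a p :=
  exfalso; apply: noC; apply: (@ucycle_has_cycle_subgraph a p);
  rewrite /ucycle /= !inE !negb_or; repeat (apply/andP; split);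
  rewrite // 1?esym //; distinct.

Lemma sole_attachment d s t d1 d2 u :
  e x d -> e s d -> e t s -> ~~ e t d -> s \in N2 -> t \in N2 ->
  e x d1 -> e x d2 -> d1 != d2 -> e t d1 -> e t d2 ->
  u \in N2 -> e u d1 -> ~~ e s u ->
  [/\ ~~ e s d1, ~~ e u t, ~~ e u d2 & forall d', e x d' -> e u d' -> d' = d1].
Proof.
move=> xd sd ts td sN2 tN2 xd1 xd2 d12 td1 td2 uN2 ud1 su.
have sd1 : ~~ e s d1 by apply/negP => sd1; no_cycle noC6 x [:: d; s; d1; t; d2].
have ut : ~~ e u t by apply/negP => ut; no_cycle noC6 x [:: d; s; t; u; d1].
have ud2 : ~~ e u d2 by apply/negP => ud2; no_cycle noC7 x [:: d; s; t; d1; u; d2].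
split => // d' xd' ud'; apply/eqP; apply: contraT => d'd1.
have d'd2 : d' != d2 by apply: contraNneq ud2 => <-.
no_cycle noC6 x [:: d'; u; d1; t; d2].
Qed.

Lemma cross_attachment d s t d1 d2 u :
  e x d -> e s d -> e t s -> ~~ e t d -> s \in N2 -> t \in N2 ->
  e x d1 -> e x d2 -> d1 != d2 -> e t d1 -> e t d2 ->
  u \in N2 -> u \notin VA -> e u d1 -> ~~ e s u ->
  exists z, [/\ z \in N2, e u z, e z d2 & ~~ e z d1].
Proof.
move=> xd sd ts td sN2 tN2 xd1 xd2 d12 td1 td2 uN2 uVA ud1 su.
have [sd1 ut ud2 u_only] :=
  sole_attachment xd sd ts td sN2 tN2 xd1 xd2 d12 td1 td2 uN2 ud1 su.
pose only_d1 v := [forall d', e x d' && e v d' ==> (d' == d1)].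
have [w [d' [/connectP[p pth ->] xd' wd' ud']]] := nbh_outside_VAstar uN2 uVA.
have only_u : only_d1 u.
  by apply/forall_inP => d'' /andP[xd'' ud'']; rewrite (u_only d'').
have not_only_w : ~~ only_d1 (last u p).
  apply/forallPn; exists d'; rewrite xd' wd' /=.
  by apply: contraNneq ud' => ->.
have [y [z [only_y /forallPn[d'' /[!negb_imply]/andP[/andP[xd'' zd''] d''d1]] yz yu]]] :=
  path_exit pth only_u not_only_w.
case/and3P: yz => yz yN2 zN2.
have attached v : v \in N2 -> only_d1 v -> e v d1 /\ ~~ e v d''.
  rewrite /N2x => /nbh2P[_ _ [a /andP[xa av]]] /forallP only_v.
  have a_d1 : a = d1 by apply/eqP; move: (only_v a); rewrite xa esym av.
  split; first by rewrite -a_d1 esym.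
  by apply: contra d''d1 => vd''; move: (only_v d''); rewrite xd'' vd''.
case: yu => [y_u | [c only_c /and3P[cy cN2 _]]]; last first.
  have [cd1 cd''] := attached c cN2 only_c.
  have [yd1 yd''] := attached y yN2 only_y.
  no_cycle noC6 x [:: d1; c; y; z; d''].
move: yz; rewrite {}y_u => uz.
have d''_d2 : d'' = d2.
  apply/eqP; apply: contraT => d''d2.
  no_cycle noC7 x [:: d''; z; u; d1; t; d2].
move: zd''; rewrite {}d''_d2 => zd2.
exists z; split => //; apply/negP => zd1.
no_cycle noC7 x [:: d; s; t; d2; z; d1].
Qed.

Lemma blocking_dominator_nadj_Sstar S s d :
  blocking Hx x S -> s \in S -> e s d -> e x d -> d \in VHs -> s \notin nbhS e Ss.
Proof.
move=> blk sS sd xd dVHs.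
have inS u : u \in S -> u \in N2 /\ u \in VH.
  by move/(subsetP (blocking_subset x_VHx blk))/setIP.
have indS : independent e S.
  case: blk => _ indS _; apply: independent_induced indS.
  by apply/subsetP => u /inS[].
apply/negP; rewrite in_set => /andP[_ /exists_inP[t tSs ts]].
have [tN2 _ /card_gt1P[d1 [d2 [/setIP[+ d1D] /setIP[+ d2D] d12]]]] := Sstar_spec tSs.
rewrite !in_set => td1 td2.
have td := VHstarx_nadj_Sstar dVHs tSs.
have [xd1 xd2] := (Dset_nbh d1D, Dset_nbh d2D).
have [sN2 _] := inS s sS.
have [u1 u1S u1d1] := blocking_dominates_D blk d1D.
have [u2 u2S u2d2] := blocking_dominates_D blk d2D.
have [u1N2 /VHx_notVA u1VA] := inS u1 u1S.
have [u2N2 /VHx_notVA u2VA] := inS u2 u2S.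
have [z1 [z1N2 u1z1 z1d2 z1d1]] :=
  cross_attachment xd sd ts td sN2 tN2 xd1 xd2 d12 td1 td2 u1N2 u1VA u1d1 (indS s u1 sS u1S).
have d21 : d2 != d1 by rewrite eq_sym.
have [z2 [z2N2 u2z2 z2d1 z2d2]] :=
  cross_attachment xd sd ts td sN2 tN2 xd2 xd1 d21 td2 td1 u2N2 u2VA u2d2 (indS s u2 sS u2S).
have [_ _ u1d2 _] :=
  sole_attachment xd sd ts td sN2 tN2 xd1 xd2 d12 td1 td2 u1N2 u1d1 (indS s u1 sS u1S).
have u1u2 := indS u1 u2 u1S u2S.
no_cycle noC6 d1 [:: u1; z1; d2; u2; z2].
Qed.

Lemma blocking_Hstar_restrict S :
  blocking Hx x S -> blocking Hstar x (S :&: nbh2 Hstar x).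
Proof.
move=> blk; have subS := blocking_subset x_VHx blk; have [_ indS dom] := blk.
split; first exact: subsetIr.
  exact: independent_sub (induced_subrel VHstarx_VHx) (subsetIl _ _) indS.
apply/subsetP => d; rewrite in_set => /and3P[xd _ dVHs].
have dVH := subsetP VHstarx_VHx d dVHs.
have : d \in nbh Hx x by rewrite in_set /induced xd x_VHx dVH.
move/(subsetP dom); rewrite in_setU in_set => /orP[dS|/andP[_ /exists_inP[s sS]]].
  by have /setIP[/nbh2P[_ /negP]] := subsetP subS d dS.
case/and3P=> sd sVH _; have /setIP[/nbh2P[sx xs _] _] := subsetP subS s sS.
have sVHs : s \in VHs.
  apply: VHx_VHstarx sVH _; rewrite in_setU negb_or.
  rewrite (blocking_dominator_nadj_Sstar blk sS sd xd dVHs) andbT.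
  by apply: contraTN sd => /(VHstarx_nadj_Sstar dVHs).
apply: (@cnbhS_adj _ _ s); last by rewrite /induced sd sVHs dVHs.
rewrite inE sS; apply/nbh2P; split => //; first by rewrite /induced negb_and xs.
by exists d; rewrite /induced xd x_VHstarx dVHs esym sd sVHs.
Qed.

Lemma blocking_Hx_union S :
  independent e Ss -> blocking Hstar x S -> blocking Hx x (S :|: Ss).
Proof.
move=> indSs blk; have sS := blocking_subset x_VHstarx blk; have [sub indS dom] := blk.
have sSVHs : S \subset VHs by apply: subset_trans sS (subsetIr _ _).
split.
- rewrite subUset (subset_trans sub (nbh2_induced_sub VHstarx_VHx x_VHstarx)).
  apply/subsetP => u uSs; have [uN2 _ /ltnW/card_gt0P[w /setIP[uw wD]]] := Sstar_spec uSs.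
  move: uN2; rewrite /N2x => /nbh2P[ux xu _]; apply/nbh2P; split => //.
    by rewrite /induced negb_and xu.
  exists w; rewrite /induced Dset_nbh // x_VHx Dset_VHx // Sstar_VHx // andbT.
  by move: uw; rewrite in_set esym => ->.
- have indU : independent e (S :|: Ss).
    apply: independentU (independent_induced sSVHs indS) indSs _ => u v uS vSs.
    by rewrite esym (VHstarx_nadj_Sstar (subsetP sSVHs u uS) vSs).
  by apply: independent_sub _ (subxx _) indU => u v /and3P[].
- apply/subsetP => d; rewrite in_set => /and3P[xd _ dVH].
  case: (boolP (d \in cnbhS e Ss)) => [|ndSs].
    rewrite in_setU => /orP[dSs|]; first by rewrite !in_setU dSs orbT.
    rewrite in_set => /andP[_ /exists_inP[t tSs td]].
    by apply: (@cnbhS_adj _ _ t); rewrite ?in_setU ?tSs ?orbT // /induced td Sstar_VHx.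
  have dVHs := VHx_VHstarx dVH ndSs.
  have : d \in nbh Hstar x by rewrite in_set /induced xd x_VHstarx dVHs.
  move/(subsetP dom); apply/subsetP.
  exact: cnbhS_sub (induced_subrel VHstarx_VHx) (subsetUl _ _).
Qed.

End LocalStructure.
End Graph.

Theorem lemma2p14 (T : finType) (e : rel T) (x : T) :
  simple_graph e -> C6C7_free e ->
  independent e (Sstar e x) ->
  (extendable (induced e (VHx e x)) x <-> extendable (induced e (VHstarx e x)) x).
Proof.
move=> [esym eirr] [noC6 noC7] indSs.
split=> ext [S blk]; apply: ext.
  by exists (S :|: Sstar e x); apply: blocking_Hx_union.
by exists (S :&: nbh2 (induced e (VHstarx e x)) x); apply: blocking_Hstar_restrict.
Qed.
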